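(* Let $\mathbf{X}\in\mathbb{R}^{n\times p}$ and for each $k\in\{1,\dots,p\}$ let $\mathcal{O}_k\subseteq\{1,\dots,n\}$ be a nonempty set of row indices, with $\mathbf{X}_{\mathcal{O}_k}$ the submatrix of $\mathbf{X}$ with rows in $\mathcal{O}_k$. Let $\pi$ be a permutation of $\{1,\dots,p\}$ with permutation matrix $P$ (whose $i$-th row is $e_{\pi(i)}^\top$), let $B=(\beta_1,\dots,\beta_p)\in\mathbb{R}^{p\times p}$ be strictly lower triangular with columns $\beta_j$, and let $\omega_1,\dots,\omega_p>0$. Define $$\ell_{\mathcal{O}}=\sum_{j=1}^p\left[\frac1{2\omega_j^2}\left\|\mathbf{X}_{\mathcal{O}_{\pi(j)},\pi(j)}-\mathbf{X}_{\mathcal{O}_{\pi(j)}}P^\top\beta_j\right\|^2+\frac12|\mathcal{O}_{\pi(j)}|\log\omega_j^2\right],$$ where $\mathbf{X}_{\mathcal{O}_{\pi(j)},\pi(j)}$ is column $\pi(j)$ of $\mathbf{X}_{\mathcal{O}_{\pi(j)}}$. Let $L_j=(e_j-\beta_j)/\omega_j$, $L=(L_1,\dots,L_p)$, and $\widehat\Sigma^{j}=\frac1{|\mathcal{O}_{\pi(j)}|}\mathbf{X}_{\mathcal{O}_{\pi(j)}}^\top\mathbf{X}_{\mathcal{O}_{\pi(j)}}$. Then $L\in\mathcal{L}_p$ and $$\ell_{\mathcal{O}}=\sum_{j=1}^p|\mathcal{O}_{\pi(j)}|\,\mathcal{L}_{\mathrm{chol}}\!\left(L_j;P\widehat\Sigma^jP^\top\right)=\sum_{j=1}^p|\mathcal{O}_{\pi(j)}|\left[\frac12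 L_j^\top P\widehat\Sigma^jP^\top L_j-\log L_{jj}\right].$$
   Context: $\{e_1,\dots,e_p\}$ is the canonical basis of $\mathbb{R}^p$; $\mathcal{L}_p$ is the set of $p\times p$ lower triangular matrices with positive diagonal. For a column vector $L_j$, $\mathcal{L}_{\mathrm{chol}}(L_j;A):=\frac12\operatorname{tr}(AL_jL_j^\top)-\log|L_j|$ with the convention $|L_j|:=L_{jj}$. Here $\mathcal{O}_k$ is the set of observations in which variable $k$ is not under experimental intervention, and $\ell_{\mathcal{O}}$ is the negative log-likelihood (up to parameter-free terms) of experimental data from a Gaussian linear structural equation model. *)

From mathcomp Require Import all_boot all_order all_algebra all_fingroup.
From mathcomp Require Import all_classical all_reals all_analysis.
Set Implicit Arguments. Unset Strict Implicit. Unset Printing Implicit Defensive.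
Import Order.TTheory GRing.Theory Num.Theory.
Local Open Scope ring_scope.

(* X_A : the submatrix of X with rows in A (rows ordered increasingly). *)
Definition subrows (R : Type) (n p : nat) (X : 'M[R]_(n, p)) (A : {set 'I_n})
  : 'M[R]_(#|A|, p) := \matrix_(i < #|A|, j < p) X (enum_val i) j.

Definition sqnorm (R : realType) (m : nat) (v : 'cV[R]_m) : R :=
  \sum_(i < m) v i 0 ^+ 2.

Definition in_Lp (R : realType) (p : nat) (L : 'M[R]_p) : Prop :=
  (forall i j : 'I_p, (i < j)%N -> L i j = 0) /\ (forall i : 'I_p, 0 < L i i).

(* L_chol(L_j; A) = 1/2 tr(A L_j L_j^T) - log |L_j|, with |L_j| := L_jj *)
Definition Lchol (R : realType) (p : nat) (j : 'I_p) (Lj : 'cV[R]_p)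
  (A : 'M[R]_p) : R :=
  2^-1 * \tr (A *m Lj *m Lj^T) - ln (Lj j 0).

From mathcomp Require Import all_boot all_order all_algebra all_fingroup.
From mathcomp Require Import all_classical all_reals all_analysis.
From mathcomp Require Import ring.
Import Order.TTheory GRing.Theory Num.Theory.
Local Open Scope ring_scope.

(* With L_j = (e_j - beta_j) / omega_j, the residual of the j-th regression is
   X_O (e_{pi j} - P^T beta_j) = omega_j X_O P^T L_j, so its squared norm is
   omega_j^2 L_j^T P X_O^T X_O P^T L_j = omega_j^2 |O| L_j^T P Sigma^j P^T L_j.
   Since beta_j vanishes in positions 1..j, L_jj = 1 / omega_j and
   (|O|/2) log omega_j^2 = - |O| log L_jj; the identity then holds term by term. *)

Section CholeskyLikelihood.
Variable R : realType.

Lemma sqnormE m (v : 'cV[R]_m) : sqnorm v = (v^T *m v) 0 0.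
Proof. by rewrite /sqnorm mxE; apply: eq_bigr => i _; rewrite !mxE expr2. Qed.

Lemma sqnormZ m (a : R) (v : 'cV[R]_m) : sqnorm (a *: v) = a ^+ 2 * sqnorm v.
Proof. by rewrite /sqnorm mulr_sumr; apply: eq_bigr => i _; rewrite mxE exprMn. Qed.

Lemma LcholE p (j : 'I_p) (v : 'cV[R]_p) (A : 'M[R]_p) :
  Lchol j v A = 2^-1 * (v^T *m A *m v) 0 0 - ln (v j 0).
Proof. by rewrite /Lchol mxtrace_mulC mulmxA trace_mx11. Qed.

Lemma trmx_perm_mx_delta p (s : 'S_p) (j : 'I_p) :
  (perm_mx s)^T *m delta_mx j 0 = delta_mx (s j) 0 :> 'cV[R]_p.
Proof.
apply/matrixP => a b; rewrite !mxE (bigD1 j) //= big1 ?addr0.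
  by rewrite !mxE !eqxx /= [b]ord1 eqxx andbT mulr1 eq_sym.
by move=> k /negbTE kj; rewrite !mxE kj /= mulr0.
Qed.

Lemma residual_perm_mx m p (Y : 'M[R]_(m, p)) (s : 'S_p) (j : 'I_p)
    (beta : 'cV[R]_p) :
  col (s j) Y - Y *m (perm_mx s)^T *m beta
    = Y *m (perm_mx s)^T *m (delta_mx j 0 - beta).
Proof. by rewrite mulmxBr -[_ *m delta_mx _ _]mulmxA trmx_perm_mx_delta colE. Qed.

Lemma gram_quadformE m p (Y : 'M[R]_(m, p)) (Q : 'M[R]_p) (c : R)
    (v : 'cV[R]_p) :
  (v^T *m (Q *m (c *: (Y^T *m Y)) *m Q^T) *m v) 0 0
    = c * sqnorm (Y *m Q^T *m v).
Proof.
rewrite sqnormE !trmx_mul trmxK -scalemxAr -scalemxAl -scalemxAr -scalemxAl.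
by rewrite !mulmxA mxE.
Qed.

Lemma in_Lp_unitriangular_scaled p (B : 'M[R]_p) (d : 'I_p -> R) :
    (forall i j : 'I_p, (i <= j)%N -> B i j = 0) -> (forall j, 0 < d j) ->
  in_Lp (\matrix_(i, j) ((1%:M - B) i j * d j)).
Proof.
move=> B_strict d_gt0; split=> [i j ij | i].
  by rewrite !mxE B_strict ?(ltnW ij) // -val_eqE (ltn_eqF ij) subr0 mul0r.
by rewrite !mxE eqxx B_strict // subr0 mul1r.
Qed.

Lemma regression_nll_Lchol m p (Y : 'M[R]_(m, p)) (s : 'S_p) (j : 'I_p)
    (w : R) (beta : 'cV[R]_p) :
    (0 < m)%N -> 0 < w -> beta j 0 = 0 ->
  let P := perm_mx s in
  (2 * w ^+ 2)^-1 * sqnorm (col (s j) Y - Y *m P^T *m beta)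
    + 2^-1 * m%:R * ln (w ^+ 2)
  = m%:R * Lchol j (w^-1 *: (delta_mx j 0 - beta))
                   (P *m (m%:R^-1 *: (Y^T *m Y)) *m P^T).
Proof.
move=> m_gt0 w_gt0 beta_j P; set Lj := w^-1 *: _.
have w_neq0 : w != 0 by rewrite gt_eqF.
have m_neq0 : (m%:R : R) != 0 by rewrite pnatr_eq0 -lt0n.
have residual : col (s j) Y - Y *m P^T *m beta = w *: (Y *m P^T *m Lj).
  by rewrite residual_perm_mx -scalemxAr scalerA divff // scale1r.
have Ljj : Lj j 0 = w^-1 by rewrite !mxE beta_j eqxx subr0 mulr1.
rewrite residual sqnormZ LcholE gram_quadformE Ljj lnXn // lnV ?posrE // mulr2n.
by field; rewrite w_neq0 m_neq0.
Qed.

End CholeskyLikelihood.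

Theorem lemma2 (R : realType) (n p : nat) (X : 'M[R]_(n, p))
  (O : 'I_p -> {set 'I_n}) (hO : forall k, O k != finset.set0)
  (pi : 'S_p) (B : 'M[R]_p)
  (hB : forall i j : 'I_p, (i <= j)%N -> B i j = 0)
  (omega : 'I_p -> R) (homega : forall j, 0 < omega j) :
  let P : 'M[R]_p := perm_mx pi in
  let XO (j : 'I_p) := subrows X (O (pi j)) in
  let ellO := \sum_(j < p)
      ((2 * omega j ^+ 2)^-1 *
         sqnorm (col (pi j) (XO j) - XO j *m P^T *m col j B)
       + 2^-1 * (#|O (pi j)|%:R) * ln (omega j ^+ 2)) in
  let L : 'M[R]_p := \matrix_(i, j) ((1%:M - B) i j / omega j) in
  let Sigma (j : 'I_p) : 'M[R]_p :=
      (#|O (pi j)|%:R)^-1 *: ((XO j)^T *m XO j) in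
  in_Lp L /\
  ellO = \sum_(j < p) #|O (pi j)|%:R * Lchol j (col j L) (P *m Sigma j *m P^T) /\
  ellO = \sum_(j < p) #|O (pi j)|%:R *
      (2^-1 * ((col j L)^T *m (P *m Sigma j *m P^T) *m col j L) 0 0
       - ln (L j j)).
Proof.
move=> P XO ellO L Sigma.
have colL j : col j L = (omega j)^-1 *: (delta_mx j 0 - col j B).
  by apply/matrixP => a b; rewrite !mxE [b]ord1 andbT mulrC.
have ellO_Lchol : ellO = \sum_(j < p)
    #|O (pi j)|%:R * Lchol j (col j L) (P *m Sigma j *m P^T).
  apply: eq_bigr => j _; rewrite colL regression_nll_Lchol //.
    by rewrite card_gt0 hO.
  by rewrite mxE hB.
split.
  apply: (@in_Lp_unitriangular_scaled _ _ B (fun j => (omega j)^-1)) => // j.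
  by rewrite invr_gt0.
split=> //; rewrite ellO_Lchol; apply: eq_bigr => j _.
by rewrite LcholE [col j L j 0]mxE.
Qed.
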